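(* Let $n\ge1$, $a_{i0}\ge0$, $a_{ij}\ge 0$ and $\pi_i>0$ for $i,j=1,\ldots,n$. For $u\in(0,\infty)^n$ define the matrices $A(u),H(u)\in\mathbb{R}^{n\times n}$ by $$A_{ij}(u)=\delta_{ij}a_{i0}+\delta_{ij}\sum_{k=1}^na_{ik}u_k+a_{ij}u_i,\qquad H_{ij}(u)=\delta_{ij}\pi_iu_i^{-2}.$$ Then for all $z\in\mathbb{R}^n$ and $u\in(0,\infty)^n$, $$z^TH(u)A(u)z\ge\sum_{i=1}^n\pi_ia_{i0}\frac{z_i^2}{u_i^2}+\frac14\sum_{i=1}^n\Big(8\pi_ia_{ii}-\sum_{j=1,\,j\ne i}^n\pi_ja_{ji}\Big)\frac{z_i^2}{u_i}.$$
   Context: $\delta_{ij}$ is the Kronecker symbol. $H(u)$ is the Hessian of $h(u)=\sum_i\pi_i(u_i-\log u_i)$. *)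

From mathcomp Require Import all_boot all_order all_algebra.
Set Implicit Arguments. Unset Strict Implicit. Unset Printing Implicit Defensive.
Import Order.TTheory GRing.Theory Num.Theory.
Local Open Scope ring_scope.

Definition Amx (R : ringType) (n : nat) (a0 : 'I_n -> R) (a : 'I_n -> 'I_n -> R)
  (u : 'I_n -> R) : 'M[R]_n :=
  \matrix_(i, j) ((i == j)%:R * a0 i + (i == j)%:R * (\sum_k a i k * u k)
                  + a i j * u i).

(* H(u)_{ij} = delta_ij pi_i u_i^{-2}: Hessian of h(u) = sum_i pi_i (u_i - log u_i) *)
Definition Hmx (R : unitRingType) (n : nat) (pi : 'I_n -> R) (u : 'I_n -> R)
  : 'M[R]_n :=
  \matrix_(i, j) ((i == j)%:R * pi i * (u i ^+ 2)^-1).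

(* Expanding the quadratic form, the diagonal entries a_ii contribute
   2 pi_i a_ii z_i^2/u_i, and each off-diagonal pair (i, j) contributes
   pi_i a_ij (u_j x^2 + x z_j) with x = z_i/u_i.  Completing the square,
   u_j x^2 + x z_j >= - z_j^2/(4 u_j), so after exchanging the summation
   indices the off-diagonal part is at least -1/4 sum_i sum_(j <> i)
   pi_j a_ji z_i^2/u_i. *)

From mathcomp Require Import all_boot all_order all_algebra.
From mathcomp Require Import ring.
Set Implicit Arguments. Unset Strict Implicit. Unset Printing Implicit Defensive.
Import Order.TTheory GRing.Theory Num.Theory.
Local Open Scope ring_scope.

Lemma sum_delta_mull (R : pzRingType) n (F : 'I_n -> R) j :
  \sum_k (j == k)%:R * F k = F j.
Proof.
rewrite (bigD1 j) //= eqxx mul1r big1 ?addr0 // => k nkj.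
by rewrite eq_sym (negbTE nkj) mul0r.
Qed.

Lemma quad_formE (R : pzRingType) n (M : 'M[R]_n) (z : 'cV[R]_n) :
  (z^T *m M *m z) 0 0 = \sum_i z i 0 * \sum_j M i j * z j 0.
Proof.
rewrite -mulmxA mxE; apply: eq_bigr => i _.
by rewrite !mxE; congr (_ * _); apply: eq_bigr => j _; rewrite mxE.
Qed.

Lemma sum_offdiag_exchange (R : nmodType) n (F : 'I_n -> 'I_n -> R) :
  \sum_i \sum_(j | j != i) F j i = \sum_i \sum_(j | j != i) F i j.
Proof.
rewrite (exchange_big_dep predT) //=; apply: eq_bigr => i _.
by apply: eq_bigl => j; rewrite eq_sym.
Qed.

Lemma ge_neg_sqr_div4 (R : realFieldType) (c x y : R) :
  0 < c -> - (y ^+ 2 / (4 * c)) <= c * x ^+ 2 + x * y.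
Proof.
move=> c_gt0; rewrite -subr_ge0 opprK.
have -> : c * x ^+ 2 + x * y + y ^+ 2 / (4 * c) = c * (x + y / (2 * c)) ^+ 2.
  by field; rewrite gt_eqF.
by rewrite mulr_ge0 ?sqr_ge0 // ltW.
Qed.

Lemma Hmx_diag (R : unitRingType) n (pi u : 'I_n -> R) :
  Hmx pi u = diag_mx (\row_i (pi i * (u i ^+ 2)^-1)).
Proof.
apply/matrixP => i j; rewrite !mxE.
by case: eqP => _; rewrite ?mul1r ?mul0r ?mulr1n ?mulr0n.
Qed.

Section HAQuadraticForm.

Variables (R : fieldType) (n : nat).
Variables (a0 : 'I_n -> R) (a : 'I_n -> 'I_n -> R) (pi u : 'I_n -> R).
Variable z : 'cV[R]_n.
Hypothesis u_neq0 : forall i, u i != 0.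

(* The two places where a_ij enters z^T H A z: through the term a_ij u_j of
   the diagonal entry A_ii, and through the entry A_ij = a_ij u_i itself. *)
Definition coupling_term i j :=
  pi i * a i j * (u j * z i 0 ^+ 2 / u i ^+ 2 + z i 0 * z j 0 / u i).

Lemma HA_quad_formE :
  (z^T *m Hmx pi u *m Amx a0 a u *m z) 0 0 =
  \sum_i pi i * a0 i * (z i 0 ^+ 2 / u i ^+ 2)
  + \sum_i \sum_j coupling_term i j.
Proof.
rewrite Hmx_diag -[_ *m diag_mx _ *m _]mulmxA mul_diag_mx quad_formE.
rewrite -big_split /=; apply: eq_bigr => i _.
under eq_bigr => j _ do rewrite !mxE.
set d := pi i / u i ^+ 2; set c := a0 i + \sum_k a i k * u k.
transitivity (z i 0 * \sum_j ((i == j)%:R * (d * c * z i 0)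
                              + d * (a i j * u i) * z j 0)).
  congr (_ * _); apply: eq_bigr => j _.
  by case: eqP => [<-|_]; rewrite /= ?mul1r ?mul0r /c; ring.
rewrite big_split /= sum_delta_mull /c !(mulrDr, mulrDl) -addrA.
congr (_ + _); first by rewrite /d; field.
rewrite !(mulr_sumr, mulr_suml) -big_split /=; apply: eq_bigr => j _.
by rewrite /coupling_term /d; field.
Qed.

Lemma coupling_term_diag i :
  coupling_term i i = 2 * pi i * a i i * (z i 0 ^+ 2 / u i).
Proof. by rewrite /coupling_term; field. Qed.

End HAQuadraticForm.

Section CouplingTermBounds.

Variables (R : realFieldType) (n : nat).
Variables (a : 'I_n -> 'I_n -> R) (pi u : 'I_n -> R) (z : 'cV[R]_n).
Hypothesis a_ge0 : forall i j, 0 <= a i j.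
Hypothesis pi_ge0 : forall i, 0 <= pi i.
Hypothesis u_gt0 : forall i, 0 < u i.

Let u_neq0 i : u i != 0. Proof. by rewrite gt_eqF. Qed.

Lemma coupling_term_ge i j :
  - (4^-1 * (pi i * a i j * (z j 0 ^+ 2 / u j))) <= coupling_term a pi u z i j.
Proof.
have -> : coupling_term a pi u z i j =
    pi i * a i j * (u j * (z i 0 / u i) ^+ 2 + z i 0 / u i * z j 0).
  by rewrite /coupling_term; field.
have -> : 4^-1 * (pi i * a i j * (z j 0 ^+ 2 / u j)) =
    pi i * a i j * (z j 0 ^+ 2 / (4 * u j)) by field.
rewrite -mulrN; apply: ler_wpM2l; first exact: mulr_ge0.
exact: ge_neg_sqr_div4.
Qed.

Lemma row_coupling_terms_ge i :
  2 * pi i * a i i * (z i 0 ^+ 2 / u i)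
  - 4^-1 * \sum_(j | j != i) pi i * a i j * (z j 0 ^+ 2 / u j)
  <= \sum_j coupling_term a pi u z i j.
Proof.
rewrite [X in _ <= X](bigD1 i) //= coupling_term_diag // lerD2l.
rewrite mulr_sumr -sumrN; apply: ler_sum => j _; exact: coupling_term_ge.
Qed.

End CouplingTermBounds.

Theorem lemma3 (R : realFieldType) (n : nat) (hn : (0 < n)%N)
  (a0 : 'I_n -> R) (a : 'I_n -> 'I_n -> R) (pi : 'I_n -> R)
  (ha0 : forall i, 0 <= a0 i) (ha : forall i j, 0 <= a i j)
  (hpi : forall i, 0 < pi i)
  (z : 'cV[R]_n) (u : 'I_n -> R) (hu : forall i, 0 < u i) :
  ((z^T *m Hmx pi u *m Amx a0 a u *m z) 0 0)
  >= \sum_i pi i * a0 i * (z i 0 ^+ 2 / u i ^+ 2)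
     + 4^-1 * \sum_i (8 * pi i * a i i - \sum_(j | j != i) pi j * a j i)
                      * (z i 0 ^+ 2 / u i).
Proof.
have u_neq0 i : u i != 0 by rewrite gt_eqF.
have pi_ge0 i : 0 <= pi i by exact: ltW.
rewrite HA_quad_formE // lerD2l.
apply: le_trans (ler_sum _ (fun i _ => row_coupling_terms_ge z ha pi_ge0 hu i)).
under eq_bigr => i _ do rewrite mulrBl mulr_suml.
rewrite sumrB sum_offdiag_exchange mulrBr sumrB -mulr_sumr lerD2r mulr_sumr.
by apply/ler_sum => i _; rewrite le_eqVlt; apply/orP; left; apply/eqP; field.
Qed.
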